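(* Let $\mathcal{H}$ be a separable, infinite dimensional, complex Hilbert space. Suppose that $T\in\mathcal{B}(\mathcal{H}\oplus\mathcal{H})$ and that $\mathcal{H}\oplus\{0\}$ is an invariant subspace for $T$. Let $B=T|_{\mathcal{H}\oplus\{0\}}\in\mathcal{B}(\mathcal{H}\oplus\{0\})$. Then there exists a sequence $(W_{n})_{n\geq1}$ of unitary operators from $\mathcal{H}\oplus\mathcal{H}$ onto $\mathcal{H}\oplus\{0\}$ such that $W_{n}TW_{n}^{*}\to B$ in the strong operator topology. *)

From HB Require Import structures.
From mathcomp Require Import all_boot all_order all_algebra complex.
From mathcomp Require Import reals.
Set Implicit Arguments. Unset Strict Implicit. Unset Printing Implicit Defensive.
Import Order.TTheory GRing.Theory Num.Theory.
Local Open Scope ring_scope.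

Definition hnorm (R : realType) (U : lmodType R[i]) (ip : U -> U -> R[i]) (x : U) : R :=
  Num.sqrt (complex.Re (ip x x)).

Section Hilbert.
Variables (R : realType) (V : lmodType R[i]).

Definition is_inner_product (ip : V -> V -> R[i]) : Prop :=
  [/\ forall (a : R[i]) (x x' y : V), ip (a *: x + x') y = a * ip x y + ip x' y,
      forall x y : V, ip y x = (ip x y)^*,
      forall x : V, 0 <= ip x x
    & forall x : V, ip x x = 0 -> x = 0].


Definition hcvg_to (ip : V -> V -> R[i]) (u : nat -> V) (l : V) : Prop :=
  forall e : R, 0 < e -> exists N : nat, forall n : nat, (N <= n)%N ->
    hnorm ip (u n - l) < e.

Definition hcauchy (ip : V -> V -> R[i]) (u : nat -> V) : Prop :=
  forall e : R, 0 < e -> exists N : nat, forall m n : nat, (N <= m)%N -> (N <= n)%N ->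
    hnorm ip (u m - u n) < e.

Definition is_hilbert (ip : V -> V -> R[i]) : Prop :=
  is_inner_product ip /\
  forall u : nat -> V, hcauchy ip u -> exists l : V, hcvg_to ip u l.

Definition separable (ip : V -> V -> R[i]) : Prop :=
  exists d : nat -> V, forall (x : V) (e : R), 0 < e ->
    exists n : nat, hnorm ip (x - d n) < e.

Definition infinite_dimensional : Prop :=
  ~ exists (n : nat) (v : 'I_n -> V), forall x : V,
      exists c : 'I_n -> R[i], x = \sum_(k < n) c k *: v k.

Definition ip_sum (ip : V -> V -> R[i]) (z z' : (V * V)%type) : R[i] :=
  ip z.1 z'.1 + ip z.2 z'.2.

Definition bounded_op_sum (ip : V -> V -> R[i]) (T : (V * V)%type -> (V * V)%type) : Prop :=
  linear T /\ exists M : R, forall z : (V * V)%type,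
    hnorm (ip_sum ip) (T z) <= M * hnorm (ip_sum ip) z.

(* W : H (+) H -> H (+) {0} (the latter identified with H via (x,0) <-> x)
   is unitary with adjoint Wadj, i.e. Wadj is the adjoint of W and
   Wadj W = I, W Wadj = I *)
Definition unitary_sum_to (ip : V -> V -> R[i])
    (W : (V * V)%type -> V) (Wadj : V -> (V * V)%type) : Prop :=
  [/\ linear W,
      forall (z : (V * V)%type) (x : V), ip (W z) x = ip_sum ip z (Wadj x),
      forall z : (V * V)%type, Wadj (W z) = z
    & forall x : V, W (Wadj x) = x].

Definition first_summand_invariant (T : (V * V)%type -> (V * V)%type) : Prop :=
  forall x : V, (T (x, 0)).2 = 0.

(* B = T restricted to H (+) {0}, viewed (via (x,0) <-> x) as an operator on H *)
Definition restr_first (T : (V * V)%type -> (V * V)%type) (x : V) : V :=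
  (T (x, 0)).1.

End Hilbert.

(* Gram-Schmidt applied to a dense sequence yields an orthonormal basis (e_k) of H;
   infinite dimensionality guarantees that the process never stops.  In coordinates,
   W_n (x, y) keeps the coordinates of x of index < n and sends the remaining
   coordinates of x and those of y alternately to the even and odd indices >= n, so
   W_n is unitary, with inverse splitting the coordinates back.  As W_n is an
   isometry fixing span(e_0, ..., e_(n-1)) (+) 0, W_n (x, 0) -> x, and
   ||W_n^* x - (x, 0)|| = ||x - W_n (x, 0)||.  Hence both terms of
     W_n T W_n^* x - B x = W_n T (W_n^* x - (x, 0)) + (W_n (B x, 0) - B x)
   tend to 0, the first one because T is bounded. *)

From HB Require Import structures.
From mathcomp Require Import all_boot all_order all_algebra complex.
From mathcomp Require Import boolp classical_sets reals.
From mathcomp Require Import ring lra.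
Set Implicit Arguments. Unset Strict Implicit. Unset Printing Implicit Defensive.
Import Order.TTheory GRing.Theory Num.Theory.
Local Open Scope ring_scope.
Local Notation "x %:C" := (x%:C)%C : ring_scope.
Local Notation Re := complex.Re.

Section ComplexScalars.
Variable R : realType.
Implicit Types (a b : R[i]) (r : R).

Lemma Re_conj a : Re a^* = Re a.
Proof. by case: a. Qed.

Lemma conj_real r : r%:C^* = r%:C.
Proof. exact: conjc_real. Qed.

Lemma Re_realM r a : Re (r%:C * a) = r * Re a.
Proof. by case: a => x y; simpc. Qed.

Lemma ge0_real a : 0 <= a -> a = (Re a)%:C.
Proof. by move=> a_ge0; have := ger0_Im a_ge0; case: a {a_ge0} => x y /= ->. Qed.

Lemma Re_ge0 a : 0 <= a -> 0 <= Re a.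
Proof. by move=> a_ge0; move: (a_ge0); rewrite (ge0_real a_ge0) lecE /= => /andP[]. Qed.

Definition sqmod a : R := Re (a * a^*).

Lemma sqmodE a : sqmod a = Re a ^+ 2 + complex.Im a ^+ 2.
Proof. by case: a => x y; rewrite /sqmod; simpc => /=; rewrite !expr2. Qed.

Lemma sqmod_ge0 a : 0 <= sqmod a.
Proof. by rewrite sqmodE addr_ge0 // sqr_ge0. Qed.

Lemma sqmod_eq0 a : sqmod a = 0 -> a = 0.
Proof.
rewrite sqmodE => /eqP; rewrite paddr_eq0 ?sqr_ge0 // !sqrf_eq0.
by case: a => x y /andP[/= /eqP -> /eqP ->].
Qed.

Lemma mul_conj a : a * a^* = (sqmod a)%:C.
Proof. exact/ge0_real/mulcJ_ge0. Qed.

Lemma sqmod_real r : sqmod r%:C = r ^+ 2.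
Proof. by rewrite sqmodE /= expr0n addr0. Qed.

End ComplexScalars.

Lemma linear_add (K : pzRingType) (U U' : lmodType K) (f : U -> U') : linear f ->
  forall u v, f (u + v) = f u + f v.
Proof. by move=> f_lin u v; have := f_lin 1 u v; rewrite !scale1r. Qed.

Lemma linear_sub (K : pzRingType) (U U' : lmodType K) (f : U -> U') : linear f ->
  forall u v, f (u - v) = f u - f v.
Proof. by move=> f_lin u v; rewrite -scaleN1r addrC f_lin scaleN1r addrC. Qed.

Section InnerProduct.
Variables (R : realType) (V : lmodType R[i]) (ip : V -> V -> R[i]).
Hypothesis ip_inner : is_inner_product ip.
Local Notation hn := (hnorm ip).
Implicit Types (a : R[i]) (x y : V).

Lemma ipDZl a x x' y : ip (a *: x + x') y = a * ip x y + ip x' y.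
Proof. by case: ip_inner. Qed.

Lemma ipC x y : ip y x = (ip x y)^*.
Proof. by case: ip_inner. Qed.

Lemma ip_self_ge0 x : 0 <= ip x x.
Proof. by case: ip_inner. Qed.

Lemma ip_self_eq0 x : ip x x = 0 -> x = 0.
Proof. by case: ip_inner => _ _ _; apply. Qed.

Lemma ip0l y : ip 0 y = 0.
Proof.
have := ipDZl 1 0 0 y; rewrite scaler0 addr0 mul1r => h.
by apply: (@addrI _ (ip 0 y)); rewrite -h addr0.
Qed.

Lemma ipDl x x' y : ip (x + x') y = ip x y + ip x' y.
Proof. by rewrite -[x in LHS]scale1r ipDZl mul1r. Qed.

Lemma ipZl a x y : ip (a *: x) y = a * ip x y.
Proof. by rewrite -[_ *: x]addr0 ipDZl ip0l addr0. Qed.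

Lemma ipNl x y : ip (- x) y = - ip x y.
Proof. by rewrite -scaleN1r ipZl mulN1r. Qed.

Lemma ipBl x x' y : ip (x - x') y = ip x y - ip x' y.
Proof. by rewrite ipDl ipNl. Qed.

Lemma ip0r x : ip x 0 = 0.
Proof. by rewrite ipC ip0l rmorph0. Qed.

Lemma ipDr x y y' : ip x (y + y') = ip x y + ip x y'.
Proof. by rewrite !(ipC _ x) ipDl rmorphD. Qed.

Lemma ipZr a x y : ip x (a *: y) = a^* * ip x y.
Proof. by rewrite !(ipC _ x) ipZl rmorphM. Qed.

Lemma ipNr x y : ip x (- y) = - ip x y.
Proof. by rewrite !(ipC _ x) ipNl rmorphN. Qed.

Lemma ipBr x y y' : ip x (y - y') = ip x y - ip x y'.
Proof. by rewrite ipDr ipNr. Qed.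

Lemma ip_suml I (r : seq I) (P : pred I) (F : I -> V) y :
  ip (\sum_(i <- r | P i) F i) y = \sum_(i <- r | P i) ip (F i) y.
Proof. exact: (big_morph (ip^~ y) (fun u v => ipDl u v y) (ip0l y)). Qed.

Lemma ip_sumr I (r : seq I) (P : pred I) (F : I -> V) x :
  ip x (\sum_(i <- r | P i) F i) = \sum_(i <- r | P i) ip x (F i).
Proof. exact: (big_morph (ip x) (ipDr x) (ip0r x)). Qed.

Definition hnorm2 x : R := Re (ip x x).

Lemma ip_self x : ip x x = (hnorm2 x)%:C.
Proof. exact/ge0_real/ip_self_ge0. Qed.

Lemma hnorm2_ge0 x : 0 <= hnorm2 x.
Proof. exact/Re_ge0/ip_self_ge0. Qed.

Lemma hnorm2_eq0 x : hnorm2 x = 0 -> x = 0.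
Proof. by move=> hx; apply: ip_self_eq0; rewrite ip_self hx. Qed.

Lemma hnorm_ge0 x : 0 <= hn x.
Proof. exact: sqrtr_ge0. Qed.

Lemma hnorm_sqr x : hn x ^+ 2 = hnorm2 x.
Proof. by rewrite sqr_sqrtr // hnorm2_ge0. Qed.

Lemma hnorm_gt0 x : x != 0 -> 0 < hn x.
Proof.
move=> x_neq0; rewrite lt_neqAle hnorm_ge0 andbT eq_sym.
apply: contra x_neq0 => /eqP hx0; apply/eqP/hnorm2_eq0.
by rewrite -hnorm_sqr hx0 expr0n.
Qed.

Lemma hnorm0 : hn 0 = 0.
Proof. by rewrite /hnorm ip0l sqrtr0. Qed.

Lemma hnorm2D x y : hnorm2 (x + y) = hnorm2 x + hnorm2 y + 2 * Re (ip x y).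
Proof.
rewrite /hnorm2 ipDl !ipDr !raddfD /= (ipC y x) Re_conj.
by rewrite mulr2n mulrDl mul1r; lra.
Qed.

Lemma hnorm2Z a x : hnorm2 (a *: x) = sqmod a * hnorm2 x.
Proof. by rewrite /hnorm2 ipZl ipZr mulrA ip_self mul_conj -rmorphM. Qed.

Lemma hnormN x : hn (- x) = hn x.
Proof. by rewrite /hnorm ipNl ipNr opprK. Qed.

Lemma hnormB_sym x y : hn (x - y) = hn (y - x).
Proof. by rewrite -hnormN opprB. Qed.

Lemma hnormZ a x : hn (a *: x) = Num.sqrt (sqmod a) * hn x.
Proof. by rewrite /hnorm -/(hnorm2 _) hnorm2Z sqrtrM // sqmod_ge0. Qed.

Lemma Re_ip_le x y : Re (ip x y) <= hn x * hn y.
Proof.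
have [->|y_neq0] := eqVneq y 0; first by rewrite ip0r hnorm0 mulr0.
have y_gt0 : 0 < hnorm2 y by rewrite -hnorm_sqr exprn_gt0 // hnorm_gt0.
pose r := Re (ip x y); pose t := r / hnorm2 y.
(* expand 0 <= ||x - t y||^2 with the optimal t *)
have := hnorm2_ge0 (x + (- t)%:C *: y).
rewrite hnorm2D hnorm2Z sqmod_real ipZr conj_real Re_realM -/r.
have -> : hnorm2 x + (- t) ^+ 2 * hnorm2 y + 2 * (- t * r) =
          hnorm2 x - r ^+ 2 / hnorm2 y by rewrite /t; field; exact: lt0r_neq0.
rewrite subr_ge0 ler_pdivrMr // => r2_le.
apply: le_trans (ler_norm r) _.
rewrite -sqrtr_sqr /hnorm -sqrtrM ?hnorm2_ge0 //.
by rewrite ler_sqrt // mulr_ge0 // hnorm2_ge0.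
Qed.

Lemma sqmod_ip_le x y : sqmod (ip x y) <= hnorm2 x * hnorm2 y.
Proof.
pose c := ip x y; pose s := Num.sqrt (sqmod c).
have s2 : s ^+ 2 = sqmod c by rewrite sqr_sqrtr // sqmod_ge0.
have := Re_ip_le x (c *: y).
rewrite ipZr mulrC -/c -/(sqmod c) hnormZ -/s -s2 -!hnorm_sqr -exprMn => hc.
have s_ge0 : 0 <= s := sqrtr_ge0 _.
have K_ge0 : 0 <= hn x * hn y by rewrite mulr_ge0 // hnorm_ge0.
rewrite ler_pXn2r ?nnegrE //.
have [->//|s_gt0] := eqVneq s 0.
have s_pos : 0 < s by rewrite lt_neqAle eq_sym s_gt0.
by rewrite -(ler_pM2l s_pos) -expr2 -mulrCA.
Qed.

End InnerProduct.

Section NormAndLimits.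
Variables (R : realType) (V : lmodType R[i]) (ip : V -> V -> R[i]).
Hypothesis ip_inner : is_inner_product ip.
Local Notation hn := (hnorm ip).
Implicit Types (x y : V) (u v : nat -> V).

Lemma hnormD x y : hn (x + y) <= hn x + hn y.
Proof.
rewrite -(@ler_pXn2r _ 2) ?nnegrE ?addr_ge0 ?hnorm_ge0 //.
rewrite hnorm_sqr // hnorm2D // sqrrD !hnorm_sqr //.
have := Re_ip_le ip_inner x y; nra.
Qed.

Lemma hnormB x y : hn (x - y) <= hn x + hn y.
Proof. by rewrite -(hnormN ip_inner y) hnormD. Qed.

Lemma lt_hnorm x e : 0 < e -> hnorm2 ip x < e ^+ 2 -> hn x < e.
Proof.
by move=> e_gt0; rewrite -(hnorm_sqr ip_inner) ltr_pXn2r ?nnegrE ?hnorm_ge0 ?ltW.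
Qed.

Lemma ip_sum_inner : is_inner_product (ip_sum ip).
Proof.
rewrite /ip_sum; split=> [a z z' w|z w|z|[x y] /= h0].
- by rewrite /= !(ipDZl ip_inner) mulrDr addrACA.
- by rewrite /= !(ipC ip_inner _ w.1) !(ipC ip_inner _ w.2) rmorphD.
- by rewrite addr_ge0 // ip_self_ge0.
have nx := hnorm2_ge0 ip_inner x; have ny := hnorm2_ge0 ip_inner y.
have /eqP : hnorm2 ip x + hnorm2 ip y = 0 by rewrite /hnorm2 -raddfD /= h0.
by rewrite paddr_eq0 // => /andP[/eqP/(hnorm2_eq0 ip_inner) -> /eqP/(hnorm2_eq0 ip_inner) ->].
Qed.

Lemma hnorm2_pair z : hnorm2 (ip_sum ip) z = hnorm2 ip z.1 + hnorm2 ip z.2.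
Proof. by rewrite /hnorm2 /ip_sum raddfD. Qed.

Lemma hnorm_pair_le z : hnorm (ip_sum ip) z <= hn z.1 + hn z.2.
Proof.
rewrite -(@ler_pXn2r _ 2) ?nnegrE ?addr_ge0 ?hnorm_ge0 //.
rewrite (hnorm_sqr ip_sum_inner) hnorm2_pair sqrrD !hnorm_sqr // -addrA lerD2l lerDr.
by rewrite mulrn_wge0 // mulr_ge0 // hnorm_ge0.
Qed.

Lemma hcvg_to_sub u l (phi : nat -> nat) :
  (forall m, (m <= phi m)%N) -> hcvg_to ip u l -> hcvg_to ip (u \o phi) l.
Proof.
move=> phi_ge u_l e e_gt0; have [N hN] := u_l e e_gt0.
by exists N => m hm; apply: hN; apply: leq_trans hm (phi_ge m).
Qed.

Lemma hcvg_to_pair u v x y : hcvg_to ip u x -> hcvg_to ip v y ->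
  hcvg_to (ip_sum ip) (fun m => (u m, v m)) (x, y).
Proof.
move=> u_x v_y e e_gt0; have e2_gt0 : 0 < e / 2 by rewrite divr_gt0.
have [N1 h1] := u_x _ e2_gt0; have [N2 h2] := v_y _ e2_gt0.
exists (maxn N1 N2) => m; rewrite geq_max => /andP[m1 m2].
apply: le_lt_trans (hnorm_pair_le _) _.
by rewrite [e]splitr ltrD // ?h1 ?h2.
Qed.

Lemma ip_lim_eq u l w c N : hcvg_to ip u l ->
  (forall m, (N <= m)%N -> ip (u m) w = c) -> ip l w = c.
Proof.
move=> u_l uw; apply/eqP; rewrite -subr_eq0; apply/eqP/sqmod_eq0/eqP.
rewrite eq_le sqmod_ge0 andbT; apply/ler_addgt0Pr => e e_gt0; rewrite add0r.
pose K := hnorm2 ip w + 1.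
have K_gt0 : 0 < K by rewrite ltr_wpDl // hnorm2_ge0.
have d_gt0 : 0 < Num.sqrt (e / K) by rewrite sqrtr_gt0 divr_gt0.
have [M hM] := u_l _ d_gt0.
have {hM} := hM (maxn N M) (leq_maxr _ _).
rewrite (hnormB_sym ip_inner) -(ltr_pXn2r (n := 2)) ?nnegrE ?hnorm_ge0 ?sqrtr_ge0 //.
rewrite (hnorm_sqr ip_inner) sqr_sqrtr; last by rewrite divr_ge0 // ltW.
rewrite ltr_pdivlMr // => small.
rewrite -(uw (maxn N M) (leq_maxl _ _)) -(ipBl ip_inner).
apply: le_trans (sqmod_ip_le ip_inner _ _) _.
apply: le_trans (ltW small).
by rewrite /K mulrDr mulr1 lerDl hnorm2_ge0.
Qed.

End NormAndLimits.

Definition orthonormal_upto (R : realType) (V : lmodType R[i]) (ip : V -> V -> R[i])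
    (f : nat -> V) (n : nat) :=
  forall i j, (i < n)%N -> (j < n)%N -> ip (f i) (f j) = (i == j)%:R.

Definition expand (R : realType) (V : lmodType R[i]) (f : nat -> V) (m : nat)
    (a : nat -> R[i]) : V :=
  \sum_(k < m) a k *: f k.

Definition coef (R : realType) (V : lmodType R[i]) (ip : V -> V -> R[i])
    (f : nat -> V) (x : V) (k : nat) : R[i] :=
  ip x (f k).

Section FiniteOrthonormal.
Variables (R : realType) (V : lmodType R[i]) (ip : V -> V -> R[i]).
Hypothesis ip_inner : is_inner_product ip.
Variables (f : nat -> V) (n : nat).
Hypothesis f_on : orthonormal_upto ip f n.
Implicit Types (a : nat -> R[i]) (x : V).

Lemma ip_expandl m a x : ip (expand f m a) x = \sum_(k < m) a k * ip (f k) x.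
Proof. by rewrite /expand (ip_suml ip_inner); apply: eq_bigr => k _; rewrite (ipZl ip_inner). Qed.

Lemma ip_expandr m a x : ip x (expand f m a) = \sum_(k < m) (a k)^* * ip x (f k).
Proof. by rewrite /expand (ip_sumr ip_inner); apply: eq_bigr => k _; rewrite (ipZr ip_inner). Qed.

Lemma ip_expand_basis m a j : (m <= n)%N -> (j < n)%N ->
  ip (expand f m a) (f j) = if (j < m)%N then a j else 0.
Proof.
move=> mn jn; elim: m mn => [|m IH] mn; first by rewrite /expand big_ord0 (ip0l ip_inner).
rewrite /expand big_ord_recr /= (ipDl ip_inner) (ipZl ip_inner) -/(expand f m a).
rewrite IH ?(ltnW mn) // f_on //.
case: (ltngtP j m) => [jm|jm|->].
- by rewrite ltnS (ltnW jm) mulr0 addr0.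
- by rewrite ltnS leqNgt jm mulr0 addr0.
- by rewrite ltnSn mulr1 add0r.
Qed.

Lemma hnorm2_expand m a : (m <= n)%N -> hnorm2 ip (expand f m a) = \sum_(k < m) sqmod (a k).
Proof.
move=> mn; rewrite /hnorm2 ip_expandr raddf_sum /=; apply: eq_bigr => k _.
by rewrite ip_expand_basis ?ltn_ord ?(leq_trans (ltn_ord k)) // /sqmod mulrC.
Qed.

Lemma hnorm2_expandB m m' a : (m' <= m)%N -> (m <= n)%N ->
  hnorm2 ip (expand f m a - expand f m' a) = \sum_(k < m) sqmod (a k) - \sum_(k < m') sqmod (a k).
Proof.
move=> m'm mn; have m'n := leq_trans m'm mn.
set D := expand f m a - expand f m' a.
have D_perp : ip D (expand f m' a) = 0.
  rewrite ip_expandr big1 // => k _; have km' := ltn_ord k.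
  rewrite (ipBl ip_inner) !ip_expand_basis ?km' ?(leq_trans km') ?(leq_trans km' m'm) //.
  by rewrite subrr mulr0.
have := hnorm2D ip_inner D (expand f m' a).
by rewrite D_perp mulr0 addr0 subrK !hnorm2_expand // => ->; rewrite addrK.
Qed.

Lemma ip_sub_proj x j : (j < n)%N -> ip (x - expand f n (coef ip f x)) (f j) = 0.
Proof. by move=> jn; rewrite (ipBl ip_inner) ip_expand_basis // jn subrr. Qed.

Lemma bessel x : \sum_(k < n) sqmod (coef ip f x k) <= hnorm2 ip x.
Proof.
pose p := expand f n (coef ip f x).
have perp : ip (x - p) p = 0.
  by rewrite ip_expandr big1 // => k _; rewrite ip_sub_proj // mulr0.
have := hnorm2D ip_inner (x - p) p; rewrite perp mulr0 addr0 subrK => ->.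
by rewrite hnorm2_expand // lerDr hnorm2_ge0.
Qed.

End FiniteOrthonormal.

Lemma nondecreasing_bounded_cauchy (R : realType) (F : nat -> R) (M : R) :
  (forall n, F n <= F n.+1) -> (forall n, F n <= M) ->
  forall e, 0 < e -> exists N, forall m n, (N <= n)%N -> (n <= m)%N -> F m - F n < e.
Proof.
move=> F_incr F_le e e_gt0.
have F_mono n m : (n <= m)%N -> F n <= F m.
  move=> /subnK <-; elim: (m - n)%N => [|k IH]; first by rewrite add0n.
  by rewrite addSn; apply: le_trans IH (F_incr _).
have F_sup : has_sup (range F) by split; [exists (F 0%N), 0%N | exists M => _ [n _ <-]].
have [_ [N _ <-] hN] := sup_adherent e_gt0 F_sup.
exists N => m n Nn nm.
have := F_mono _ _ Nn; have : F m <= sup (range F) by apply: sup_upper_bound => //; exists m.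
lra.
Qed.

Definition square_summable (R : realType) (a : nat -> R[i]) :=
  exists M, forall m, \sum_(k < m) sqmod (a k) <= M.

Section Synthesis.
Variables (R : realType) (V : lmodType R[i]) (ip : V -> V -> R[i]).
Hypothesis ip_hilbert : is_hilbert ip.
Let ip_inner : is_inner_product ip := proj1 ip_hilbert.
Variable e : nat -> V.
Hypothesis e_on : forall i j, ip (e i) (e j) = (i == j)%:R.
Implicit Types (a : nat -> R[i]).

Lemma orthonormal_upto_all n : orthonormal_upto ip e n.
Proof. by move=> i j _ _; exact: e_on. Qed.

Lemma expand_cauchy a : square_summable a -> hcauchy ip (fun m => expand e m a).
Proof.
move=> [M hM] eps eps_gt0.
have incr n : \sum_(k < n) sqmod (a k) <= \sum_(k < n.+1) sqmod (a k).
  by rewrite big_ord_recr /= lerDl sqmod_ge0.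
have [N hN] := nondecreasing_bounded_cauchy incr hM (exprn_gt0 2 eps_gt0).
exists N => m n Nm Nn.
wlog nm : m n Nm Nn / (n <= m)%N.
  move=> gen; case: (leqP n m) => [|/ltnW] h; first exact: gen.
  by rewrite (hnormB_sym ip_inner); exact: gen.
apply: (lt_hnorm ip_inner eps_gt0).
by rewrite (hnorm2_expandB ip_inner (@orthonormal_upto_all m)) // hN.
Qed.

Definition synth a : V :=
  if pselect (exists l, hcvg_to ip (fun m => expand e m a) l) is left h
  then projT1 (cid h) else 0.

Lemma synth_cvg a : square_summable a -> hcvg_to ip (fun m => expand e m a) (synth a).
Proof.
move=> a_sq; rewrite /synth; case: pselect => [h|[]]; first exact: projT2 (cid h).
exact/(proj2 ip_hilbert)/expand_cauchy.
Qed.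

Lemma coef_synth a k : square_summable a -> coef ip e (synth a) k = a k.
Proof.
move=> a_sq; apply: (ip_lim_eq ip_inner (synth_cvg a_sq) (N := k.+1)) => m km.
by rewrite (ip_expand_basis ip_inner (@orthonormal_upto_all m)) // km.
Qed.

End Synthesis.

Lemma sum_nonneg_widen (R : numDomainType) (F : nat -> R) m d : (forall k, 0 <= F k) ->
  \sum_(k < m) F k <= \sum_(k < m + d) F k.
Proof. by move=> F_ge0; rewrite big_split_ord /= lerDl sumr_ge0. Qed.

Section Interleave.
Variable n : nat.

(* interleave f g = f 0, ..., f (n - 1), f n, g 0, f (n + 1), g 1, ... *)
Definition interleave {T : Type} (f g : nat -> T) k :=
  if (k < n)%N then f k else if odd (k - n) then g (k - n)./2 else f (n + (k - n)./2)%N.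

Definition split_left {T : Type} (c : nat -> T) k :=
  if (k < n)%N then c k else c (n + (k - n).*2)%N.

Definition split_right {T : Type} (c : nat -> T) j := c (n + j.*2).+1.

Lemma interleave_even T (f g : nat -> T) j : interleave f g (n + j.*2) = f (n + j)%N.
Proof. by rewrite /interleave ltnNge leq_addr /= addKn odd_double doubleK. Qed.

Lemma interleave_odd T (f g : nat -> T) j : interleave f g (n + j.*2).+1 = g j.
Proof.
rewrite /interleave ltnNge leqW ?leq_addr //= subSn ?leq_addr // addKn /=.
by rewrite odd_double uphalf_double.
Qed.

Lemma split_left_interleave T (f g : nat -> T) : split_left (interleave f g) = f.
Proof.
apply: funext => k; rewrite /split_left; case: ifP => kn; first by rewrite /interleave kn.
by rewrite interleave_even subnKC // leqNgt kn.
Qed.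

Lemma split_right_interleave T (f g : nat -> T) : split_right (interleave f g) = g.
Proof. exact/funext/interleave_odd. Qed.

Lemma interleave_split T (c : nat -> T) : interleave (split_left c) (split_right c) = c.
Proof.
apply: funext => k; rewrite /interleave; case: ifP => kn; first by rewrite /split_left kn.
have -> : k = (n + (k - n))%N by rewrite subnKC // leqNgt kn.
rewrite addKn -[in RHS](odd_double_half (k - n)).
case: (odd _) => /=; first by rewrite /split_right addnCA add1n.
by rewrite /split_left ltnNge leq_addr /= addKn.
Qed.

Lemma sum_interleave A B (Z : nmodType) (Phi : A -> B -> Z) (f g : nat -> A) (h : nat -> B) j :
  \sum_(k < n + j.*2) Phi (interleave f g k) (h k) =
  \sum_(k < n + j) Phi (f k) (split_left h k) + \sum_(k < j) Phi (g k) (split_right h k).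
Proof.
elim: j => [|j IH].
  rewrite !addn0 big_ord0 addr0; apply: eq_bigr => k _.
  by rewrite /interleave /split_left ltn_ord.
rewrite doubleS !addnS !big_ord_recr /= IH interleave_even interleave_odd.
rewrite /split_left ltnNge leq_addr /= addKn -!addrA.
congr (_ + _); rewrite [in RHS]addrCA; congr (_ + _); exact: addrC.
Qed.

End Interleave.

Section SquareSummable.
Variables (R : realType) (n : nat).
Implicit Types (a b c : nat -> R[i]).

Let sum_interleave_sqmod a b j :
  \sum_(k < n + j.*2) sqmod (interleave n a b k) =
  \sum_(k < n + j) sqmod (a k) + \sum_(k < j) sqmod (b k).
Proof. exact: (sum_interleave n (fun x (_ : unit) => sqmod x) a b (fun=> tt)). Qed.

Let sum_split_sqmod c j :
  \sum_(k < n + j.*2) sqmod (c k) =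
  \sum_(k < n + j) sqmod (split_left n c k) + \sum_(k < j) sqmod (split_right n c k).
Proof. by rewrite -sum_interleave_sqmod interleave_split. Qed.

Lemma square_summable_interleave a b :
  square_summable a -> square_summable b -> square_summable (interleave n a b).
Proof.
move=> [Ma ha] [Mb hb]; exists (Ma + Mb) => m.
have widen := sum_nonneg_widen (F := fun k => sqmod (interleave n a b k)) m (n + m).
apply: le_trans (widen (fun k => sqmod_ge0 _)) _.
by rewrite addnCA addnn sum_interleave_sqmod lerD.
Qed.

Lemma square_summable_split_left c : square_summable c -> square_summable (split_left n c).
Proof.
move=> [M hM]; exists M => m.
have widen := sum_nonneg_widen (F := fun k => sqmod (split_left n c k)) m n.
apply: le_trans (widen (fun k => sqmod_ge0 _)) _.
apply: le_trans (hM (n + m.*2)%N); rewrite addnC sum_split_sqmod lerDl.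
by rewrite sumr_ge0 // => k _; exact: sqmod_ge0.
Qed.

Lemma square_summable_split_right c : square_summable c -> square_summable (split_right n c).
Proof.
move=> [M hM]; exists M => m; apply: le_trans (hM (n + m.*2)%N).
by rewrite sum_split_sqmod lerDr sumr_ge0 // => k _; exact: sqmod_ge0.
Qed.

End SquareSummable.

Section OrthonormalBasis.
Variables (R : realType) (V : lmodType R[i]) (ip : V -> V -> R[i]).
Hypothesis ip_hilbert : is_hilbert ip.
Let ip_inner : is_inner_product ip := proj1 ip_hilbert.
Variable e : nat -> V.
Hypothesis e_on : forall i j, ip (e i) (e j) = (i == j)%:R.
Hypothesis e_total : forall y, (forall k, ip y (e k) = 0) -> y = 0.

Lemma coef_inj u v : coef ip e u = coef ip e v -> u = v.
Proof.
move=> uv; apply/eqP; rewrite -subr_eq0; apply/eqP/e_total => k.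
by rewrite (ipBl ip_inner) -!/(coef ip e _ k) uv subrr.
Qed.

Lemma square_summable_coef x : square_summable (coef ip e x).
Proof.
by exists (hnorm2 ip x) => m; exact: (bessel ip_inner (orthonormal_upto_all e_on (n := m))).
Qed.

Lemma synth_coef x : synth ip e (coef ip e x) = x.
Proof.
by apply: coef_inj; apply: funext => k; rewrite coef_synth //; exact: square_summable_coef.
Qed.

Lemma expand_coef_cvg x : hcvg_to ip (fun m => expand e m (coef ip e x)) x.
Proof. by rewrite -{2}(synth_coef x); apply: synth_cvg => //; exact: square_summable_coef. Qed.

Lemma coef_combine a u v : coef ip e (a *: u + v) = (fun k => a * coef ip e u k + coef ip e v k).
Proof. by apply: funext => k; rewrite /coef (ipDZl ip_inner). Qed.

Definition W n (z : V * V) : V := synth ip e (interleave n (coef ip e z.1) (coef ip e z.2)).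

Definition Wadj n (x : V) : V * V :=
  (synth ip e (split_left n (coef ip e x)), synth ip e (split_right n (coef ip e x))).

Lemma coef_W n z : coef ip e (W n z) = interleave n (coef ip e z.1) (coef ip e z.2).
Proof.
apply: funext => k; rewrite coef_synth //.
by apply: square_summable_interleave; exact: square_summable_coef.
Qed.

Lemma coef_Wadj1 n x : coef ip e (Wadj n x).1 = split_left n (coef ip e x).
Proof.
apply: funext => k; rewrite coef_synth //.
by apply: square_summable_split_left; exact: square_summable_coef.
Qed.

Lemma coef_Wadj2 n x : coef ip e (Wadj n x).2 = split_right n (coef ip e x).
Proof.
apply: funext => k; rewrite coef_synth //.
by apply: square_summable_split_right; exact: square_summable_coef.
Qed.

Lemma W_linear n : linear (W n).
Proof.
move=> a u v; apply: coef_inj; rewrite coef_combine !coef_W /= !coef_combine.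
by apply: funext => k; rewrite /interleave; case: ifP => _ //; case: ifP.
Qed.

Lemma WadjK n : cancel (W n) (Wadj n).
Proof.
move=> [x y]; congr (_, _); apply: coef_inj.
- by rewrite coef_Wadj1 coef_W split_left_interleave.
- by rewrite coef_Wadj2 coef_W split_right_interleave.
Qed.

Lemma WK n : cancel (Wadj n) (W n).
Proof. by move=> x; apply: coef_inj; rewrite coef_W coef_Wadj1 coef_Wadj2 interleave_split. Qed.

Lemma ip_expand_coef_l m a x : ip (expand e m a) x = \sum_(k < m) a k * (coef ip e x k)^*.
Proof. by rewrite (ip_expandl ip_inner); apply: eq_bigr => k _; rewrite (ipC ip_inner). Qed.

Lemma W_adjoint n z x : ip (W n z) x = ip_sum ip z (Wadj n x).
Proof.
(* The identity holds for partial sums; pass to the limit in (H (+) H) (+) (H (+) H),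
   whose fourth component only pads. *)
pose w : (V * V) * (V * V) := ((x, - (Wadj n x).1), (- (Wadj n x).2, 0)).
pose u J : (V * V) * (V * V) := ((expand e (n + J.*2) (coef ip e (W n z)),
  expand e (n + J) (coef ip e z.1)), (expand e J (coef ip e z.2), expand e J (coef ip e z.2))).
have ip2_inner := ip_sum_inner (ip_sum_inner ip_inner).
have u_cvg : hcvg_to (ip_sum (ip_sum ip)) u ((W n z, z.1), (z.2, z.2)).
  apply: (hcvg_to_pair (ip_sum_inner ip_inner)); apply: (hcvg_to_pair ip_inner).
  - apply: (hcvg_to_sub (phi := fun J => n + J.*2)%N) (expand_coef_cvg _) => J.
    by rewrite -addnn addnA leq_addl.
  - by apply: (hcvg_to_sub (phi := fun J => n + J)%N) (expand_coef_cvg _) => J; rewrite leq_addl.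
  - exact: expand_coef_cvg.
  - exact: expand_coef_cvg.
have : ip_sum (ip_sum ip) ((W n z, z.1), (z.2, z.2)) w = 0.
  apply: (ip_lim_eq ip2_inner u_cvg (N := 0%N)) => J _.
  rewrite /ip_sum /w /= !(ipNr ip_inner) (ip0r ip_inner) addr0.
  rewrite !ip_expand_coef_l coef_W coef_Wadj1 coef_Wadj2.
  by rewrite (sum_interleave n (fun a b => a * b^*)) -addrA -opprD subrr.
rewrite /ip_sum /w /= (ip0r ip_inner) addr0 !(ipNr ip_inner).
by rewrite -addrA -opprD => /eqP; rewrite subr_eq0 => /eqP.
Qed.

Lemma W_unitary n : unitary_sum_to ip (W n) (Wadj n).
Proof. by split; [exact: W_linear | exact: W_adjoint | exact: WadjK | exact: WK]. Qed.

Lemma W_isometry n z : hnorm ip (W n z) = hnorm (ip_sum ip) z.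
Proof. by rewrite /hnorm W_adjoint WadjK. Qed.

Lemma coef_expand m a : coef ip e (expand e m a) = fun j => if (j < m)%N then a j else 0.
Proof.
apply: funext => j; have e_on' := orthonormal_upto_all e_on (n := maxn m j.+1).
by rewrite /coef (ip_expand_basis ip_inner e_on') ?leq_maxl ?leq_maxr.
Qed.

Lemma W_fix_expand n y : W n (expand e n (coef ip e y), 0) = expand e n (coef ip e y).
Proof.
apply: coef_inj; rewrite coef_W /= coef_expand; apply: funext => k.
rewrite /interleave; case: ifP => kn; first by rewrite kn.
case: ifP => _; first by rewrite /coef (ip0l ip_inner).
by rewrite ltnNge leq_addr.
Qed.

Lemma W_first_le n y :
  hnorm ip (W n (y, 0) - y) <= 2 * hnorm ip (y - expand e n (coef ip e y)).
Proof.
set p := expand e n (coef ip e y).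
have -> : W n (y, 0) - y = W n (y - p, 0) - (y - p).
  have -> : (y, 0) = (y - p, 0) + (p, 0) :> V * V.
    by apply: injective_projections; rewrite /= ?subrK ?addr0.
  by rewrite (linear_add (W_linear n)) W_fix_expand opprB addrA.
apply: le_trans (hnormB ip_inner _ _) _.
by rewrite W_isometry /hnorm /ip_sum /= (ip0l ip_inner) addr0 mulr2n mulrDl mul1r.
Qed.

Lemma W_first_cvg y : hcvg_to ip (fun n => W n (y, 0)) y.
Proof.
move=> eps eps_gt0; have [N hN] := expand_coef_cvg y (divr_gt0 eps_gt0 (ltr0Sn _ 1)).
exists N => n Nn; apply: le_lt_trans (W_first_le n y) _.
by rewrite (hnormB_sym ip_inner) mulrC -ltr_pdivlMr // hN.
Qed.

Lemma W_conj_cvg T : bounded_op_sum ip T -> first_summand_invariant T ->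
  forall x, hcvg_to ip (fun n => W n (T (Wadj n x))) (restr_first T x).
Proof.
move=> [T_lin [M T_le]] T_inv x eps eps_gt0.
set B := restr_first T x.
have TB : T (x, 0) = (B, 0) by apply: injective_projections; [|exact: T_inv].
pose K := `|M| + 1.
have K_gt0 : 0 < K by rewrite ltr_pwDr // normr_ge0.
have [N1 h1] := W_first_cvg x (divr_gt0 eps_gt0 (mulr_gt0 (ltr0Sn _ 1) K_gt0)).
have [N2 h2] := W_first_cvg B (divr_gt0 eps_gt0 (ltr0Sn _ 1)).
exists (maxn N1 N2) => n; rewrite geq_max => /andP[n1 n2].
set w := Wadj n x - (x, 0).
have -> : W n (T (Wadj n x)) - B = W n (T w) + (W n (B, 0) - B).
  by rewrite /w (linear_sub T_lin) TB (linear_sub (W_linear n)) addrA subrK.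
apply: le_lt_trans (hnormD ip_inner _ _) _.
have w_norm : hnorm (ip_sum ip) w = hnorm ip (W n (x, 0) - x).
  rewrite -(W_isometry n) /w (linear_sub (W_linear n)) WK.
  exact: hnormB_sym ip_inner _ _.
have Tw_le : hnorm ip (W n (T w)) <= K * hnorm ip (W n (x, 0) - x).
  rewrite W_isometry -w_norm; apply: le_trans (T_le w) _.
  by rewrite ler_wpM2r ?hnorm_ge0 // /K (le_trans (ler_norm M)) // lerDl.
rewrite [eps]splitr ltr_leD //; last exact: ltW (h2 n n2).
apply: le_lt_trans Tw_le _.
by rewrite mulrC -ltr_pdivlMr // -mulrA -invfM h1.
Qed.

End OrthonormalBasis.

Section GramSchmidt.
Variables (R : realType) (V : lmodType R[i]) (ip : V -> V -> R[i]).
Hypothesis ip_inner : is_inner_product ip.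
Local Notation hn := (hnorm ip).
Variable d : nat -> V.
Hypothesis d_dense : forall (x : V) (eps : R), 0 < eps -> exists n, hn (x - d n) < eps.
Hypothesis V_infdim : infinite_dimensional V.

Lemma orthogonal_dense_eq0 y : (forall m, ip y (d m) = 0) -> y = 0.
Proof.
move=> y_perp; apply/eqP; apply/negP => /negP y_neq0.
have y_gt0 := hnorm_gt0 ip_inner y_neq0.
have [m hm] := d_dense y y_gt0.
have := Re_ip_le ip_inner y (y - d m).
rewrite (ipBr ip_inner) y_perp subr0 -/(hnorm2 ip y) -(hnorm_sqr ip_inner) expr2.
by rewrite leNgt ltr_pM2l // hm.
Qed.

Definition residual (f : nat -> V) n m := d m - expand f n (coef ip f (d m)).

Definition next_vector (f : nat -> V) n : V :=
  if pselect (exists m, residual f n m != 0) is left h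
  then ((hn (residual f n (ex_minn h)))^-1)%:C *: residual f n (ex_minn h) else 0.

Lemma residual_ext f g n : (forall k, (k < n)%N -> f k = g k) -> residual f n = residual g n.
Proof.
move=> fg; apply: funext => m; rewrite /residual /expand /coef; congr (_ - _).
by apply: eq_bigr => k _; rewrite fg.
Qed.

(* gs_family n k is the k-th Gram-Schmidt vector for k < n, junk otherwise *)
Fixpoint gs_family n : nat -> V :=
  if n is n'.+1 then fun k => if (k < n')%N then gs_family n' k else next_vector (gs_family n') n'
  else fun=> 0.

Definition gs k := gs_family k.+1 k.

Lemma gs_familyE n k : (k < n)%N -> gs_family n k = gs k.
Proof.
move=> /subnKC <-; elim: (n - k.+1)%N => [|j IH]; first by rewrite addn0.
by rewrite addnS /= (leq_trans (ltnSn k)) ?leq_addr.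
Qed.

Lemma gs_next n : gs n = next_vector gs n.
Proof. by rewrite /gs /= ltnn /next_vector (residual_ext (g := gs)) // => k; exact: gs_familyE. Qed.

Lemma residual_neq0 n : orthonormal_upto ip gs n -> exists m, residual gs n m != 0.
Proof.
move=> gs_on; apply: contrapT => /forallNP res0; apply: V_infdim.
exists n, (fun k : 'I_n => gs k) => x; exists (fun k : 'I_n => coef ip gs x k).
apply/eqP; rewrite -subr_eq0; apply/eqP/orthogonal_dense_eq0 => m.
have -> : d m = expand gs n (coef ip gs (d m)).
  by apply/eqP; rewrite -subr_eq0; apply/negP => /negP; exact: res0.
rewrite (ip_expandr ip_inner) big1 // => k _.
by rewrite (ip_sub_proj ip_inner gs_on) // mulr0.
Qed.

Lemma gs_step n : orthonormal_upto ip gs n -> exists m0,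
  [/\ residual gs n m0 != 0, forall m, residual gs n m != 0 -> (m0 <= m)%N &
      gs n = ((hn (residual gs n m0))^-1)%:C *: residual gs n m0].
Proof.
move=> gs_on; rewrite gs_next /next_vector; case: pselect => [h|[]]; last exact: residual_neq0.
by case: ex_minnP => m0 r0 m0_min; exists m0.
Qed.

Lemma gs_orthonormal_upto n : orthonormal_upto ip gs n.
Proof.
elim: n => [|n IH]; first by move=> i j.
have [m0 [r0 _ gs_n]] := gs_step IH.
set r := residual gs n m0 in r0 gs_n.
have r_gt0 : 0 < hn r := hnorm_gt0 ip_inner r0.
have perp j : (j < n)%N -> ip (gs n) (gs j) = 0.
  by move=> jn; rewrite gs_n (ipZl ip_inner) (ip_sub_proj ip_inner IH) // mulr0.
move=> i j; rewrite !ltnS [(i <= n)%N]leq_eqVlt [(j <= n)%N]leq_eqVlt.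
move=> /orP[/eqP->|i_n] /orP[/eqP->|j_n].
- rewrite eqxx gs_n (ipZl ip_inner) (ipZr ip_inner) conj_real mulrA -rmorphM.
  rewrite (ip_self ip_inner) -rmorphM -(hnorm_sqr ip_inner) -expr2 exprVn mulVf //.
  exact: expf_neq0 (lt0r_neq0 r_gt0).
- by rewrite perp // gtn_eqF.
- by rewrite (ipC ip_inner) perp // ltn_eqF // conjC0.
- exact: IH.
Qed.

Lemma gs_orthonormal i j : ip (gs i) (gs j) = (i == j)%:R.
Proof. by apply: (@gs_orthonormal_upto (maxn i j).+1); rewrite ltnS ?leq_maxl ?leq_maxr. Qed.

Lemma residual_gs_succ n m : residual gs n m = 0 -> residual gs n.+1 m = 0.
Proof.
rewrite /residual => /eqP; rewrite subr_eq0 => /eqP dm.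
have dm_perp : coef ip gs (d m) n = 0.
  by rewrite /coef dm (ip_expand_basis ip_inner (@gs_orthonormal_upto n.+1)) // ltnn.
by rewrite /expand big_ord_recr /= dm_perp scale0r addr0 -/(expand _ _ _) -dm subrr.
Qed.

Lemma residual_gs n m : (m < n)%N -> residual gs n m = 0.
Proof.
elim: n m => [//|n IH] m; rewrite ltnS leq_eqVlt => /orP[/eqP->|mn]; last first.
  exact/residual_gs_succ/IH.
have [r0|r_neq0] := eqVneq (residual gs n n) 0; first exact: residual_gs_succ.
have [m0 [r0 m0_min gs_n]] := gs_step (@gs_orthonormal_upto n).
have m0n : m0 = n.
  apply/eqP; rewrite eqn_leq m0_min //= leqNgt; apply/negP => m0_lt.
  by move: r0; rewrite IH ?eqxx.
rewrite {m0_min} m0n in r0 gs_n; set r := residual gs n n in r0 gs_n r_neq0 *.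
have r_gt0 : 0 < hn r := hnorm_gt0 ip_inner r0.
have rE : r = (hn r)%:C *: gs n.
  by rewrite gs_n scalerA -rmorphM mulfV ?lt0r_neq0 // scale1r.
have dn : d n = expand gs n (coef ip gs (d n)) + r by rewrite addrC subrK.
have coef_dn : coef ip gs (d n) n = (hn r)%:C.
  rewrite /coef {1}dn (ipDl ip_inner) {1}rE (ipZl ip_inner).
  rewrite (ip_expand_basis ip_inner (@gs_orthonormal_upto n.+1)) //= ltnn add0r.
  by rewrite gs_orthonormal eqxx mulr1.
rewrite /residual /expand big_ord_recr /= coef_dn -rE -/(expand _ _ _).
by rewrite {1}dn subrr.
Qed.

Lemma gs_total y : (forall k, ip y (gs k) = 0) -> y = 0.
Proof.
move=> y_perp; apply: orthogonal_dense_eq0 => m.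
have /eqP := residual_gs (ltnSn m); rewrite subr_eq0 => /eqP ->.
by rewrite (ip_expandr ip_inner) big1 // => k _; rewrite y_perp mulr0.
Qed.

End GramSchmidt.

Theorem lemma3p9 (R : realType) (V : lmodType R[i]) (ip : V -> V -> R[i])
  (hH : is_hilbert ip) (hsep : separable ip) (hinf : infinite_dimensional V)
  (T : (V * V)%type -> (V * V)%type)
  (hT : bounded_op_sum ip T) (hinv : first_summand_invariant T) :
  exists (W : nat -> (V * V)%type -> V) (Wadj : nat -> V -> (V * V)%type),
    (forall n : nat, unitary_sum_to ip (W n) (Wadj n)) /\
    forall x : V, hcvg_to ip (fun n => W n (T (Wadj n x))) (restr_first T x).
Proof.
have [d d_dense] := hsep.
have e_on := gs_orthonormal (proj1 hH) d_dense hinf.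
have e_total := gs_total (proj1 hH) d_dense hinf.
exists (W ip (gs ip d)), (Wadj ip (gs ip d)); split.
- exact: (W_unitary hH e_on e_total).
- exact: (W_conj_cvg hH e_on e_total hT hinv).
Qed.
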